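(* Let $K$ be an arbitrary field, $P=K[t][[x_1,\dots,x_s]]$, and $M$ a finitely generated $P$-module. For $t_0\in K$ put $M(t_0):=M\otimes_{K[t]}K[t]/\langle t-t_0\rangle\cong M/\langle t-t_0\rangle M$. Then for every $o\in K$ there is a Zariski open neighborhood $U\subset\mathbb A^1_K=K$ of $o$ such that $\dim_K M(t_0)\le\dim_K M(o)$ for all $t_0\in U$.
   Context: $K[t][[x_1,\dots,x_s]]$ denotes formal power series in $x_1,\dots,x_s$ with coefficients in the polynomial ring $K[t]$. Dimensions may be infinite (the statement is vacuous when $\dim_K M(o)=\infty$). *)

From HB Require Import structures.
From mathcomp Require Import all_boot all_order all_algebra.
Set Implicit Arguments. Unset Strict Implicit. Unset Printing Implicit Defensive.
Import Order.TTheory GRing.Theory Num.Theory.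
Local Open Scope ring_scope.

(* Monomials x^a in s variables: exponent vectors a : 'I_s -> nat. *)
Definition mon (s : nat) := {ffun 'I_s -> nat}.

(* P = K[t][[x_1,...,x_s]] : a formal power series is its coefficient
   function, coefficients in K[t] = {poly K} (t is 'X). *)
Definition mps (K : fieldType) (s : nat) := mon s -> {poly K}.

Section MPS.
Variables (K : fieldType) (s : nat).

Definition mps_add (f g : mps K s) : mps K s := fun a => f a + g a.
Definition mps_zero : mps K s := fun _ => 0.

(* Cauchy product: (fg)_a = sum_{b <= a} f_b g_{a-b}; b ranges over
   exponent vectors bounded componentwise by a. *)
Definition mps_mul (f g : mps K s) : mps K s := fun a =>
  \sum_(b : {ffun 'I_s -> 'I_((\sum_(i < s) a i)%N).+1}
         | [forall i, (b i <= a i)%N])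
     f [ffun i => nat_of_ord (b i)] * g [ffun i => (a i - b i)%N].

Definition mps_polyscale (c : {poly K}) (f : mps K s) : mps K s :=
  fun a => c * f a.
End MPS.

Definition vadd (K : fieldType) s n (u v : 'I_n -> mps K s) : 'I_n -> mps K s :=
  fun i => mps_add (u i) (v i).
Definition vzero (K : fieldType) s n : 'I_n -> mps K s := fun _ => @mps_zero K s.
Definition vscale (K : fieldType) s n (p : mps K s) (u : 'I_n -> mps K s)
  : 'I_n -> mps K s := fun i => mps_mul p (u i).
Definition vpolyscale (K : fieldType) s n (c : {poly K}) (u : 'I_n -> mps K s)
  : 'I_n -> mps K s := fun i => mps_polyscale c (u i).

(* N is a P-submodule of P^n.  Every finitely generated P-module M is
   isomorphic to P^n / N for some n and some submodule N. *)
Definition is_submodule (K : fieldType) s n (N : ('I_n -> mps K s) -> Prop) :=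
  [/\ N (@vzero K s n),
      (forall u v, N u -> N v -> N (vadd u v)) &
      (forall p u, N u -> N (vscale p u))].

(* Membership in N + (t - t0) P^n, the kernel of P^n ->> M(t0),
   where M = P^n / N and M(t0) = M / (t - t0) M. *)
Definition in_fiber_kernel (K : fieldType) s n (N : ('I_n -> mps K s) -> Prop)
  (t0 : K) (w : 'I_n -> mps K s) : Prop :=
  exists u v, N u /\ w = vadd u (vpolyscale ('X - t0%:P) v).

(* dim_K M(t0) <= d : M(t0) is spanned over K by d elements. *)
Definition dimK_fiber_le (K : fieldType) s n (N : ('I_n -> mps K s) -> Prop)
  (t0 : K) (d : nat) : Prop :=
  exists e : 'I_d -> ('I_n -> mps K s),
    forall w : 'I_n -> mps K s, exists c : 'I_d -> K,
      in_fiber_kernel N t0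
        (vadd w (vpolyscale (-1) (\big[@vadd K s n/@vzero K s n]_(j < d)
                                     vpolyscale (c j)%:P (e j)))).

(* Zariski open subsets of the affine line A^1_K = K: empty or cofinite. *)
Definition zariski_open_A1 (K : fieldType) (U : K -> Prop) : Prop :=
  (forall x, ~ U x) \/ exists S : seq K, forall x, U x <-> x \notin S.

From HB Require Import structures.
From mathcomp Require Import all_boot all_order all_algebra.
From mathcomp Require Import boolp.
From mathcomp Require Import zify ring.
Set Implicit Arguments. Unset Strict Implicit. Unset Printing Implicit Defensive.
Import GRing.Theory.
Local Open Scope ring_scope.

(* Evaluating t at t0 identifies M(t0) with K[[x]]^n / N(t0), N(t0) being the
   image of N.  Truncating series to the monomials x^b with all exponents at
   most d maps N(t0) to a subspace T(t0) of a fixed finite-dimensional space.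
   If dim M(o) <= d then T(o) has codimension at most d.  Conversely, whenever
   T(t0) has codimension at most d, adding the coordinates of degree >= j for
   j = 0, ..., d cannot lower the rank at every step; where it stalls,
   m^j K[[x]]^n lies in N(t0) + m^(j+1) K[[x]]^n, so by Nakayama in N(t0), and
   dim M(t0) <= d follows.  A basis of T(o) lifts to elements of N, whose
   truncations depend polynomially on t0; a minor that is nonzero at o stays
   nonzero off finitely many points. *)

Section Monomials.
Variable s : nat.
Implicit Types a b c : mon s.

Definition mdeg a := (\sum_(i < s) a i)%N.
Definition mle b a := [forall i, (b i <= a i)%N].
Definition madd a b : mon s := [ffun i => (a i + b i)%N].
Definition msub a b : mon s := [ffun i => (a i - b i)%N].
Definition mon0 : mon s := [ffun => 0%N].

Definition mon_of_box k (b : {ffun 'I_s -> 'I_k}) : mon s := [ffun i => nat_of_ord (b i)].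
Definition box_of_mon k a : {ffun 'I_s -> 'I_k.+1} := [ffun i => inord (a i)].

(* Enumerated through the box of side [mdeg a], exactly as in [mps_mul]. *)
Definition mdivisors a : seq (mon s) :=
  map (@mon_of_box (mdeg a).+1)
    (filter (fun x : {ffun 'I_s -> 'I_(mdeg a).+1} => [forall i, (x i <= a i)%N])
      (enum {ffun 'I_s -> 'I_(mdeg a).+1})).

Lemma mleP b a : reflect (forall i, (b i <= a i)%N) (mle b a).
Proof. exact: forallP. Qed.

Lemma mcoef_le_mdeg a i : (a i <= mdeg a)%N.
Proof. by rewrite /mdeg (bigD1 i) //= leq_addr. Qed.

Lemma mdeg0 : mdeg mon0 = 0%N.
Proof. by rewrite /mdeg big1 // => i _; rewrite ffunE. Qed.

Lemma mdegD a b : mdeg (madd a b) = (mdeg a + mdeg b)%N.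
Proof. by rewrite /mdeg -big_split; apply: eq_bigr => i _; rewrite ffunE. Qed.

Lemma mdeg_eq0 a : mdeg a = 0%N -> a = mon0.
Proof.
by move=> a0; apply/ffunP=> i; apply/eqP; rewrite ffunE -leqn0 -a0 mcoef_le_mdeg.
Qed.

Lemma mdeg_mle b a : mle b a -> (mdeg b <= mdeg a)%N.
Proof. by move/mleP=> ba; apply: leq_sum => i _; apply: ba. Qed.

Lemma mon_of_box_inj k : injective (@mon_of_box k).
Proof.
move=> b1 b2 /ffunP eqb; apply/ffunP=> i; apply/val_inj.
by have := eqb i; rewrite !ffunE.
Qed.

Lemma box_of_monK k a : (forall i, a i <= k)%N -> mon_of_box (box_of_mon k a) = a.
Proof. by move=> ak; apply/ffunP=> i; rewrite !ffunE inordK // ltnS. Qed.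

Lemma mon_of_boxK k : cancel (@mon_of_box k.+1) (box_of_mon k).
Proof. by move=> b; apply/ffunP=> i; rewrite !ffunE; apply: val_inj; rewrite /= inordK. Qed.

Lemma mdivisors_uniq a : uniq (mdivisors a).
Proof. by rewrite (map_inj_uniq (@mon_of_box_inj _)) filter_uniq // enum_uniq. Qed.

Lemma mem_mdivisors a b : (b \in mdivisors a) = mle b a.
Proof.
apply/mapP/mleP => [[x] | ba].
  by rewrite mem_filter => /andP[/forallP xa _] -> i; rewrite ffunE.
have bd i : (b i <= mdeg a)%N by apply: leq_trans (ba i) (mcoef_le_mdeg a i).
exists (box_of_mon (mdeg a) b); last by rewrite box_of_monK.
rewrite mem_filter mem_enum andbT; apply/forallP=> i.
by rewrite ffunE inordK ?ltnS.
Qed.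

Lemma eq_big_mdivisors (R : Type) (idx : R) (op : Monoid.com_law idx) a
    (r : seq (mon s)) (F : mon s -> R) :
  uniq r -> (forall b, (b \in r) = mle b a) ->
  \big[op/idx]_(b <- r) F b = \big[op/idx]_(b <- mdivisors a) F b.
Proof.
move=> r_uniq mem_r; apply/perm_big/uniq_perm; rewrite ?mdivisors_uniq // => b.
by rewrite mem_r mem_mdivisors.
Qed.

Lemma msubKC a b : mle b a -> madd b (msub a b) = a.
Proof.
by move/mleP=> ba; apply/ffunP=> i; rewrite !ffunE; move: (ba i); move: (a i) (b i); lia.
Qed.

Lemma maddKm a b : msub (madd a b) a = b.
Proof. by apply/ffunP=> i; rewrite !ffunE; move: (a i) (b i); lia. Qed.

Lemma msubKm a b : mle b a -> msub a (msub a b) = b.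
Proof.
by move/mleP=> ba; apply/ffunP=> i; rewrite !ffunE; move: (ba i); move: (a i) (b i); lia.
Qed.

Lemma mle_msub a b : mle (msub a b) a.
Proof. by apply/mleP=> i; rewrite !ffunE leq_subr. Qed.

Lemma mle0m a : mle mon0 a.
Proof. by apply/mleP=> i; rewrite ffunE. Qed.

Lemma mlem0 b : mle b mon0 -> b = mon0.
Proof. by move/mleP=> b0; apply/ffunP=> i; have := b0 i; rewrite !ffunE leqn0 => /eqP. Qed.

Lemma msubm0 a : msub a mon0 = a.
Proof. by apply/ffunP=> i; rewrite !ffunE subn0. Qed.

Lemma msubmm a : msub a a = mon0.
Proof. by apply/ffunP=> i; rewrite !ffunE subnn. Qed.

Lemma mle_trans a b c : mle a b -> mle b c -> mle a c.
Proof. by move=> /mleP ab /mleP bc; apply/mleP=> i; apply: leq_trans (ab i) (bc i). Qed.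

Lemma mdeg_ltn b a : mle b a -> b != a -> (mdeg b < mdeg a)%N.
Proof.
move=> ba; apply: contraNT; rewrite -leqNgt -(msubKC ba) mdegD -[X in (_ <= X)%N]addn0.
by rewrite leq_add2l leqn0 => /eqP/mdeg_eq0 ->; apply/eqP/ffunP=> i; rewrite !ffunE addn0.
Qed.

Lemma big_mdivisors0 (R : Type) (idx : R) (op : Monoid.com_law idx) (F : mon s -> R) :
  \big[op/idx]_(b <- mdivisors mon0) F b = F mon0.
Proof.
rewrite -(@eq_big_mdivisors _ _ _ _ [:: mon0]) ?big_seq1 // => b.
by rewrite inE; apply/eqP/idP => [-> | /mlem0 //]; apply: mle0m.
Qed.

Lemma exists_mdivisor_of_mdeg j a : (j <= mdeg a)%N -> exists2 b, mle b a & mdeg b = j.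
Proof.
elim: j => [|j IHj] ja; first by exists mon0; rewrite ?mle0m ?mdeg0.
have [b ba bj] := IHj (ltnW ja).
have [i0 bi0] : exists i, (b i < a i)%N.
  apply/existsP; apply: contraLR ja; rewrite negb_exists -leqNgt -bj => /forallP ab.
  by apply: leq_sum => i _; rewrite leqNgt ab.
exists [ffun i => if i == i0 then (b i).+1 else b i].
  by apply/mleP=> i; rewrite ffunE; case: eqP => [-> // | _]; apply: (mleP _ _ ba).
rewrite /mdeg (bigD1 i0) //= ffunE eqxx -bj /mdeg [in RHS](bigD1 i0) //= addSn.
by congr (_ + _)%N.+1; apply: eq_bigr => i /negbTE i_neq; rewrite ffunE i_neq.
Qed.

End Monomials.

Arguments mon0 {s}.

(* Formal power series in [s] variables over an arbitrary commutative ring;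
   [mps K s] is [fps {poly K} s]. *)
Definition fps (A : Type) (s : nat) := mon s -> A.

Section FpsRing.
Variables (A : comNzRingType) (s : nat).
Implicit Types (f g h : fps A s) (a b c e : mon s).

Definition fps_mul f g : fps A s := fun a => \sum_(b <- mdivisors a) f b * g (msub a b).
Definition fps_one : fps A s := fun a => if a == mon0 then 1 else 0.
Definition fps_zero : fps A s := fun _ => 0.
Definition fps_add f g : fps A s := fun a => f a + g a.
Definition fps_opp f : fps A s := fun a => - f a.

Lemma fps_mulC : commutative fps_mul.
Proof.
move=> f g; apply: funext=> a; rewrite /fps_mul.
rewrite -(@eq_big_mdivisors _ _ _ _ a (map (msub a) (mdivisors a))); last first.
- move=> b; apply/mapP/idP => [[c _ ->] | ba]; first exact: mle_msub.
  by exists (msub a b); rewrite ?mem_mdivisors ?mle_msub ?msubKm.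
- rewrite map_inj_in_uniq ?mdivisors_uniq // => b c.
  by rewrite !mem_mdivisors => ba ca eqbc; rewrite -(msubKm ba) eqbc msubKm.
rewrite big_map; apply: eq_big_seq => b; rewrite mem_mdivisors => ba.
by rewrite msubKm // mulrC.
Qed.

(* Both sides are sums over chains c <= b <= a; the inner sum over b is
   reindexed by e = b - c, which ranges over the divisors of a - c. *)
Lemma fps_mulA : associative fps_mul.
Proof.
move=> f g h; apply: funext=> a; rewrite /fps_mul.
have inner b : b \in mdivisors a ->
   (\sum_(c <- mdivisors b) f c * g (msub b c)) * h (msub a b) =
   \sum_(c <- mdivisors a | mle c b) f c * g (msub b c) * h (msub a b).
  rewrite mem_mdivisors => ba; rewrite big_distrl /= -[RHS]big_filter.
  apply/esym/eq_big_mdivisors; first by rewrite filter_uniq ?mdivisors_uniq.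
  move=> c; rewrite mem_filter mem_mdivisors.
  by apply/andP/idP => [[] // | cb]; split=> //; apply: mle_trans cb ba.
rewrite (eq_big_seq _ inner) /= (exchange_big_dep predT) //=.
apply: eq_big_seq => c; rewrite mem_mdivisors => /mleP ca; rewrite big_distrr /=.
rewrite -(@eq_big_mdivisors _ _ _ _ (msub a c)
           (map (fun b => msub b c) [seq b <- mdivisors a | mle c b])); last first.
- move=> e; apply/mapP/mleP => [[b] | ec].
    rewrite mem_filter mem_mdivisors => /andP[/mleP cb /mleP ba] -> i.
    by rewrite !ffunE; move: (cb i) (ba i); move: (a i) (b i) (c i); lia.
  exists (madd c e); last by rewrite maddKm.
  rewrite mem_filter mem_mdivisors; apply/andP; split; apply/mleP=> i; rewrite !ffunE.
    exact: leq_addr.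
  by move: (ec i) (ca i); rewrite !ffunE; move: (a i) (c i) (e i); lia.
- rewrite map_inj_in_uniq ?filter_uniq ?mdivisors_uniq // => b1 b2.
  rewrite !mem_filter => /andP[cb1 _] /andP[cb2 _] eqb.
  by rewrite -(msubKC cb1) eqb msubKC.
rewrite big_map big_filter [LHS]big_seq_cond [RHS]big_seq_cond.
apply: eq_bigr => b /andP[]; rewrite mem_mdivisors => /mleP ba /mleP cb.
rewrite mulrA; congr (_ * _ * h _).
by apply/ffunP=> i; rewrite !ffunE; move: (ba i) (cb i); move: (a i) (b i) (c i); lia.
Qed.

Lemma fps_mul1 : left_id fps_one fps_mul.
Proof.
move=> f; apply: funext=> a; rewrite /fps_mul (bigD1_seq mon0) ?mdivisors_uniq //=;
  last by rewrite mem_mdivisors mle0m.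
rewrite /fps_one eqxx mul1r msubm0 big1_seq ?addr0 // => b /andP[/negbTE -> _].
by rewrite mul0r.
Qed.

Lemma fps_mulDl : left_distributive fps_mul fps_add.
Proof.
move=> f g h; apply: funext=> a; rewrite /fps_mul /fps_add -big_split /=.
by apply: eq_bigr => b _; rewrite mulrDl.
Qed.

Lemma fps_one_neq0 : fps_one != fps_zero.
Proof.
apply/eqP=> /(congr1 (fun F => F mon0)); rewrite /fps_one /fps_zero eqxx.
by apply/eqP; rewrite oner_eq0.
Qed.

HB.instance Definition _ := gen_eqMixin (fps A s).
HB.instance Definition _ := gen_choiceMixin (fps A s).

Lemma fps_addA : associative fps_add.
Proof. by move=> f g h; apply: funext=> a; rewrite /fps_add addrA. Qed.
Lemma fps_addC : commutative fps_add.
Proof. by move=> f g; apply: funext=> a; rewrite /fps_add addrC. Qed.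
Lemma fps_add0 : left_id fps_zero fps_add.
Proof. by move=> f; apply: funext=> a; rewrite /fps_add /fps_zero add0r. Qed.
Lemma fps_addN : left_inverse fps_zero fps_opp fps_add.
Proof. by move=> f; apply: funext=> a; rewrite /fps_add /fps_zero /fps_opp addNr. Qed.

HB.instance Definition _ :=
  GRing.isZmodule.Build (fps A s) fps_addA fps_addC fps_add0 fps_addN.
HB.instance Definition _ := @GRing.Zmodule_isComNzRing.Build (fps A s) fps_one fps_mul
  fps_mulA fps_mulC fps_mul1 fps_mulDl fps_one_neq0.

Lemma fpsD f g a : (f + g) a = f a + g a. Proof. by []. Qed.
Lemma fpsN f a : (- f) a = - f a. Proof. by []. Qed.
Lemma fpsM f g a : (f * g) a = \sum_(b <- mdivisors a) f b * g (msub a b).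
Proof. by []. Qed.
Lemma fps1 a : (1 : fps A s) a = if a == mon0 then 1 else 0. Proof. by []. Qed.
Lemma fps_sum (I : Type) (r : seq I) (P : pred I) (F : I -> fps A s) a :
  (\sum_(i <- r | P i) F i) a = \sum_(i <- r | P i) F i a.
Proof. by elim/big_rec2: _ => // i y1 y2 _ <-. Qed.

Definition fps_coef0 f : A := f mon0.
Definition fps_mon b : fps A s := fun a => if a == b then 1 else 0.
Definition fps_C (x : A) : fps A s := fun a => if a == mon0 then x else 0.

Lemma fps_coef0_is_zmod_morphism : zmod_morphism fps_coef0. Proof. by []. Qed.
Lemma fps_coef0_is_monoid_morphism : monoid_morphism fps_coef0.
Proof.
split=> [|f g]; first by rewrite /fps_coef0 fps1 eqxx.
by rewrite /fps_coef0 fpsM big_mdivisors0 msubmm.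
Qed.
HB.instance Definition _ :=
  GRing.isZmodMorphism.Build (fps A s) A fps_coef0 fps_coef0_is_zmod_morphism.
HB.instance Definition _ :=
  GRing.isMonoidMorphism.Build (fps A s) A fps_coef0 fps_coef0_is_monoid_morphism.

Lemma fps_monM b f a : (fps_mon b * f) a = if mle b a then f (msub a b) else 0.
Proof.
rewrite fpsM; case: ifP => ba.
  rewrite (bigD1_seq b) ?mdivisors_uniq ?mem_mdivisors //= /fps_mon eqxx mul1r.
  by rewrite big1_seq ?addr0 // => c /andP[/negbTE -> _]; rewrite mul0r.
rewrite big1_seq // => c; rewrite mem_mdivisors /fps_mon.
by case: eqP => [-> | _]; rewrite ?ba ?mul0r.
Qed.

Lemma fps_CM x f a : (fps_C x * f) a = x * f a.
Proof.
rewrite fpsM (bigD1_seq mon0) ?mdivisors_uniq ?mem_mdivisors ?mle0m //= /fps_C eqxx.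
by rewrite msubm0 big1_seq ?addr0 // => c /andP[/negbTE -> _]; rewrite mul0r.
Qed.

End FpsRing.

Section FpsInverse.
Variables (K : fieldType) (s : nat) (f : fps K s).
Hypothesis f0_neq0 : fps_coef0 f != 0.

(* The coefficients of the inverse, by recursion on the degree, with a fuel
   parameter [k] that only needs to exceed the degree. *)
Fixpoint fps_inv_rec (k : nat) (a : mon s) : K :=
  if k is k'.+1 then
    if a == mon0 then (fps_coef0 f)^-1
    else - (fps_coef0 f)^-1 *
           \sum_(b <- mdivisors a | b != a) f (msub a b) * fps_inv_rec k' b
  else 0.

Definition fps_inv : fps K s := fun a => fps_inv_rec (mdeg a).+1 a.

Lemma fps_inv_recE k a : (mdeg a < k)%N -> fps_inv_rec k a = fps_inv a.
Proof.
elim/ltn_ind: k a => -[//|k] IHk a ak /=; rewrite /fps_inv /=.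
case: eqP => // _; congr (- _ * _).
rewrite [LHS]big_seq_cond [RHS]big_seq_cond; apply: eq_bigr => b /andP[].
rewrite mem_mdivisors => ba /(mdeg_ltn ba) ba_lt.
rewrite IHk ?(leq_trans ba_lt) //.
by move: ak; case: (mdeg a) ba_lt => // m ba_lt ak; rewrite IHk //; lia.
Qed.

Lemma fps_mulVf : fps_inv * f = 1.
Proof.
apply: funext=> a; rewrite fpsM (bigD1_seq a) ?mdivisors_uniq ?mem_mdivisors //=;
  last by apply/mleP.
rewrite msubmm fps1 {1}/fps_inv /=; case: eqP => [-> | a_neq0].
  rewrite big1_seq ?addr0; first by rewrite mulVf.
  by move=> b /andP[/eqP b_neq0]; rewrite mem_mdivisors => /mlem0.
have -> : \sum_(b <- mdivisors a | b != a) fps_inv b * f (msub a b) =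
          \sum_(b <- mdivisors a | b != a) f (msub a b) * fps_inv_rec (mdeg a) b.
  rewrite [LHS]big_seq_cond [RHS]big_seq_cond; apply: eq_bigr => b /andP[].
  by rewrite mem_mdivisors => ba b_neq; rewrite mulrC fps_inv_recE // mdeg_ltn.
by rewrite -[f mon0]/(fps_coef0 f); move: (\sum_(b <- _ | _) _) => S; field.
Qed.

End FpsInverse.

Lemma maximal_free_rows (F : fieldType) L (P : 'rV[F]_L -> Prop) :
  exists k (B : 'M[F]_(k, L)),
    [/\ forall r, P (row r B), row_free B & forall v, P v -> (v <= B)%MS].
Proof.
apply: contrapT => no_basis.
have extend k (B : 'M[F]_(k, L)) : (forall r, P (row r B)) -> row_free B ->
    exists B' : 'M[F]_(k + 1, L), (forall r, P (row r B')) /\ row_free B'.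
  move=> PB freeB.
  have [v [Pv vB]] : exists v, P v /\ ~ (v <= B)%MS.
    apply: contrapT => allB; apply: no_basis; exists k, B; split=> // v Pv.
    by apply: contrapT => vB; apply: allB; exists v.
  exists (col_mx B v); split.
    move=> r; rewrite -(splitK r); case: (split r) => r' /=; first by rewrite rowKu.
    by rewrite rowKd (ord1 r') row_id.
  have ltB : (B < B + v)%MS.
    by rewrite ltmxE addsmxSl /=; apply: contra_notN vB; apply: submx_trans (addsmxSr B v).
  rewrite /row_free eqn_leq rank_leq_row /= -addsmxE.
  by apply: leq_trans (rank_ltmx ltB); rewrite (eqP freeB) addn1.
have free_of_size k : exists B : 'M[F]_(k, L), (forall r, P (row r B)) /\ row_free B.
  elim: k => [|k [B [PB freeB]]]; last by rewrite -addn1; apply: extend.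
  by exists 0; split; [case | rewrite /row_free eqn_leq rank_leq_row].
have [B [_ /eqP freeB]] := free_of_size L.+1.
by have := rank_leq_col B; rewrite freeB ltnn.
Qed.

Lemma exists_complement_rows (F : fieldType) L k (B : 'M[F]_(k, L)) d :
  (L <= \rank B + d)%N -> exists E : 'M[F]_(d, L), forall v : 'rV_L, (v <= B + E)%MS.
Proof.
move=> rankB; pose C := (B^C)%MS.
have rankC : (\rank C <= d)%N by rewrite mxrank_compl; lia.
exists (pid_mx (\rank C) *m row_ebase C) => v.
apply: submx_trans (submx_full v (addsmx_compl_full B)) _; apply: addsmxS => //.
rewrite -/C -{1}(mulmx_ebase C) -mulmxA.
have -> : pid_mx (\rank C) =
          (pid_mx (\rank C) : 'M_(L, d)) *m (pid_mx (\rank C) : 'M[F]_(d, L)).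
  by rewrite mul_pid_mx minnn (minn_idPr rankC).
by rewrite -!mulmxA mulmxA submxMl.
Qed.

Lemma nonincreasing_stalls (r : nat -> nat) L d :
  (forall j, r j.+1 <= r j)%N -> (r 0 <= L)%N -> (L <= r d.+1 + d)%N ->
  exists2 j, (j <= d)%N & r j.+1 = r j.
Proof.
move=> r_noninc r0 rd.
have drop m : (exists2 j, (j < m)%N & r j.+1 = r j) \/ (r m + m <= r 0)%N.
  elim: m => [|m [[j jm rj] | IHm]]; first by right; rewrite addn0.
  - by left; exists j => //; apply: ltnW.
  - case: (ltngtP (r m.+1) (r m)) => [rlt | rgt | req].
    + by right; rewrite addnS; apply: leq_trans IHm; rewrite ltn_add2r.
    + by have := r_noninc m; rewrite leqNgt rgt.
    + by left; exists m.
have [[j jd rj] | rdrop] := drop d.+1; first by exists j.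
by have := leq_trans rdrop r0; lia.
Qed.

(* [boxI n s d] indexes the coordinates x^b e_i with every exponent of b
   at most [d]. *)
Definition boxI (n s d : nat) := ('I_n * {ffun 'I_s -> 'I_d.+1})%type.

Section VanishingOrder.
Variables (K : fieldType) (s n : nat).
Implicit Types v w : 'rV[fps K s]_n.

Definition vanish_below j v := forall i a, (mdeg a < j)%N -> v 0 i a = 0.

Definition deg_mon_vec j (i : 'I_n) (b : {ffun 'I_s -> 'I_j.+1}) : 'rV[fps K s]_n :=
  if mdeg (mon_of_box b) == j then fps_mon K (mon_of_box b) *: delta_mx 0 i else 0.

Lemma vanish_belowD j v w : vanish_below j v -> vanish_below j w -> vanish_below j (v + w).
Proof. by move=> v0 w0 i a aj; rewrite mxE fpsD v0 ?w0 ?addr0. Qed.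

Lemma vanish_below_le j j' v : (j' <= j)%N -> vanish_below j v -> vanish_below j' v.
Proof. by move=> j'j v0 i a aj; apply: v0; apply: leq_trans aj j'j. Qed.

Lemma scale_deg_mon_vecE j g i (b : {ffun 'I_s -> 'I_j.+1}) i' a :
  (g *: deg_mon_vec i b) 0 i' a =
  if [&& i' == i, mdeg (mon_of_box b) == j & mle (mon_of_box b) a]
  then g (msub a (mon_of_box b)) else 0.
Proof.
rewrite /deg_mon_vec; case: eqP => [_ | _]; last by rewrite scaler0 mxE /= andbF.
rewrite !mxE eqxx mulrC; case: eqP => _ /=; rewrite ?mulr1n ?mulr0n ?mulr0 ?mul0r ?mulr1 //.
by rewrite fps_monM.
Qed.

(* Split off from each exponent of degree at least [j] a chosen divisor of
   degree [j]. *)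
Lemma vanish_below_decomp j e v : vanish_below (j + e) v ->
  exists2 q : 'I_n -> {ffun 'I_s -> 'I_j.+1} -> fps K s,
    (forall i b c, (mdeg c < e)%N -> q i b c = 0) &
    v = \sum_(p : boxI n s j) q p.1 p.2 *: deg_mon_vec p.1 p.2.
Proof.
move=> v0.
have divisor_choice (a : mon s) : exists b : mon s, (j <= mdeg a)%N -> mle b a /\ mdeg b = j.
  case: (leqP j (mdeg a)) => [/exists_mdivisor_of_mdeg[b ba bj] | aj]; last by exists a.
  by exists b.
have [pk pkP] := boolp.choice divisor_choice.
pose q i (b : {ffun 'I_s -> 'I_j.+1}) : fps K s := fun c => let a := madd (mon_of_box b) c in
  if (mdeg (mon_of_box b) == j) && (pk a == mon_of_box b) then v 0 i a else 0.
exists q.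
  move=> i b c ce; rewrite /q; case: ifP => // /andP[/eqP bj _]; apply: v0.
  by rewrite mdegD bj ltn_add2l.
rewrite -(pair_bigA _ (fun i b => q i b *: deg_mon_vec i b)).
apply/rowP=> i; apply: funext=> a; rewrite summxE fps_sum.
rewrite (bigD1 i) //= [X in _ = _ + X]big1 ?addr0 => [|i' /negbTE i'_neq]; last first.
  by rewrite summxE fps_sum big1 // => b _; rewrite scale_deg_mon_vecE eq_sym i'_neq.
rewrite summxE fps_sum.
under eq_bigr => b _ do rewrite scale_deg_mon_vecE eqxx /= /q.
case: (leqP j (mdeg a)) => [ja | aj].
  have [pka pkaj] := pkP a ja.
  have pk_box l : (pk a l <= j)%N by rewrite -pkaj mcoef_le_mdeg.
  rewrite (bigD1 (box_of_mon j (pk a))) //= box_of_monK // pkaj pka (msubKC pka) !eqxx.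
  rewrite big1 ?addr0 // => b b_neq.
  case: ifP => // /andP[_ ba]; rewrite (msubKC ba); case: ifP => // /andP[_ /eqP pkb].
  by move: b_neq; rewrite pkb mon_of_boxK eqxx.
rewrite big1 => [|b _]; first by rewrite v0 // (leq_trans aj) ?leq_addr.
case: ifP => // /andP[/eqP bj ba].
by have := mdeg_mle ba; rewrite bj leqNgt aj.
Qed.

End VanishingOrder.

Section Truncation.
Variables (K : fieldType) (s n d : nat).
Implicit Types v w : 'rV[fps K s]_n.
Local Notation L := #|{: boxI n s d}|.

Definition trunc v : 'rV[K]_L := \row_k v 0 (enum_val k).1 (mon_of_box (enum_val k).2).

Definition in_box (a : mon s) := [forall l, (a l <= d)%N].

Definition untrunc (y : 'rV[K]_L) : 'rV[fps K s]_n :=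
  \row_i (fun a => if in_box a then y 0 (enum_rank ((i, box_of_mon d a) : boxI n s d))
                   else 0).

Lemma trunc_is_zmod_morphism : zmod_morphism trunc.
Proof. by move=> v w; apply/rowP=> k; rewrite !mxE. Qed.
HB.instance Definition _ :=
  GRing.isZmodMorphism.Build _ _ trunc trunc_is_zmod_morphism.

Lemma truncZ c v : trunc (fps_C c *: v) = c *: trunc v.
Proof. by apply/rowP=> k; rewrite !mxE fps_CM. Qed.

Lemma in_box_mon_of_box (b : {ffun 'I_s -> 'I_d.+1}) : in_box (mon_of_box b).
Proof. by apply/forallP=> l; rewrite ffunE -ltnS. Qed.

Lemma untruncK : cancel untrunc trunc.
Proof.
move=> y; apply/rowP=> k; rewrite !mxE in_box_mon_of_box mon_of_boxK.
by case: (enum_val k) (enum_valK k) => i b /= ->.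
Qed.

Lemma trunc_comb k (B : 'M[K]_(k, L)) (w : 'I_k -> 'rV_n) x :
  (forall r, row r B = trunc (w r)) -> x *m B = trunc (\sum_r fps_C (x 0 r) *: w r).
Proof.
by move=> Bw; rewrite mulmx_sum_row raddf_sum; apply: eq_bigr => r _ /=; rewrite truncZ Bw.
Qed.

Lemma trunc_eq0_vanish v : trunc v = 0 -> vanish_below d.+1 v.
Proof.
move=> /rowP v0 i a ad.
have a_box l : (a l <= d)%N by rewrite -ltnS (leq_trans _ ad) // ltnS mcoef_le_mdeg.
have := v0 (enum_rank ((i, box_of_mon d a) : boxI n s d)).
by rewrite !mxE enum_rankK /= box_of_monK.
Qed.

Lemma untrunc_vanish j (y : 'rV[K]_L) :
  (forall k, (mdeg (mon_of_box (enum_val k).2) < j)%N -> y 0 k = 0) ->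
  vanish_below j (untrunc y).
Proof.
move=> y0 i a aj; rewrite mxE; case: ifP => // /forallP a_box; apply: y0.
by rewrite enum_rankK /= box_of_monK.
Qed.

Definition deg_ge_mx j : 'M[K]_L :=
  diag_mx (\row_k (if (j <= mdeg (mon_of_box (enum_val k).2))%N then 1 else 0)).

Lemma deg_ge_mxS j : (deg_ge_mx j.+1 <= deg_ge_mx j)%MS.
Proof.
suff -> : deg_ge_mx j.+1 = deg_ge_mx j.+1 *m deg_ge_mx j by apply: submxMl.
apply/matrixP=> k k'; rewrite mul_mx_diag !mxE.
case: eqP => [-> | _]; last by rewrite !mul0r.
by case: ifP => jk; rewrite ?mul0r // ifT ?mulr1 // ltnW.
Qed.

Lemma row_deg_ge_mx j k : (j <= mdeg (mon_of_box (enum_val k).2))%N ->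
  row k (deg_ge_mx j) = delta_mx 0 k.
Proof. by move=> jk; rewrite row_diag_mx mxE jk scale1r. Qed.

Lemma trunc_deg_mon_vec j i (b : {ffun 'I_s -> 'I_j.+1}) :
  (j <= d)%N -> mdeg (mon_of_box b) = j ->
  trunc (deg_mon_vec K i b) =
    delta_mx 0 (enum_rank ((i, box_of_mon d (mon_of_box b)) : boxI n s d)).
Proof.
move=> jd bj.
have b_box l : (mon_of_box b l <= d)%N by rewrite (leq_trans (mcoef_le_mdeg _ l)) ?bj.
apply/rowP=> k; rewrite /deg_mon_vec bj eqxx !mxE eqxx -(inj_eq enum_val_inj) enum_rankK.
case: (enum_val k) => i' b' /=; rewrite xpair_eqE mulrC.
case: (i' =P i) => _ /=; rewrite ?mulr0n ?mulr1n ?mul0r ?mul1r // /fps_mon.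
case: eqP => [b'E | b'_neq].
  by rewrite -b'E mon_of_boxK eqxx.
by case: eqP => // b'E; case: b'_neq; rewrite b'E box_of_monK.
Qed.

End Truncation.

Definition codim_le (K : fieldType) s n (S : 'rV[fps K s]_n -> Prop) (d : nat) :=
  exists e : 'I_d -> 'rV[fps K s]_n,
    forall g, exists c : 'I_d -> K, S (g - \sum_j fps_C (c j) *: e j).

Lemma rank_trunc_ge (K : fieldType) s n d (S : 'rV[fps K s]_n -> Prop) k
    (B : 'M[K]_(k, #|{: boxI n s d}|)) :
  codim_le S d -> (forall v, S v -> (trunc d v <= B)%MS) ->
  (#|{: boxI n s d}| <= \rank B + d)%N.
Proof.
move=> [e Se] SB; pose E : 'M[K]_(d, _) := \matrix_(j, k) trunc d (e j) 0 k.
have full : (1%:M <= B + E)%MS.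
  apply/row_subP=> k'; rewrite row1; set y := delta_mx 0 k'.
  have [c Sc] := Se (untrunc y).
  have [x xB] := submxP (SB _ Sc).
  apply/sub_addsmxP; exists (x, \row_j c j) => /=.
  rewrite -xB (@trunc_comb _ _ _ _ _ _ e) => [|j]; last by apply/rowP=> l; rewrite !mxE.
  rewrite -raddfD /=; under [X in _ + X]eq_bigr do rewrite mxE.
  by rewrite subrK untruncK.
have := mxrankS full; rewrite mxrank1 => /leq_trans; apply.
by apply: leq_trans (mxrank_adds_leqif B E).1 _; rewrite leq_add2l rank_leq_row.
Qed.

Section Submodule.
Variables (K : fieldType) (s n : nat) (S : 'rV[fps K s]_n -> Prop).
Hypotheses (S0 : S 0) (SD : forall x y, S x -> S y -> S (x + y))
           (SZ : forall r x, S x -> S (r *: x)).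

Lemma submod_sum (I : Type) (r : seq I) (F : I -> 'rV_n) :
  (forall i, S (F i)) -> S (\sum_(i <- r) F i).
Proof. by move=> SF; elim/big_ind: _. Qed.

(* Nakayama's lemma, by the determinant trick: if h = nu + R h with R having
   entries without constant term, then det (1 - R) is a unit of K[[x]]. *)
Lemma nakayama_mem (I : finType) (h nu : I -> 'rV[fps K s]_n) (R : I -> I -> fps K s) :
  (forall p q, fps_coef0 (R p q) = 0) -> (forall p, S (nu p)) ->
  (forall p, h p = nu p + \sum_q R p q *: h q) -> forall p, S (h p).
Proof.
move=> R0 Snu hE.
pose H : 'M[fps K s]_(#|I|, n) := \matrix_(k, j) h (enum_val k) 0 j.
pose Nu : 'M[fps K s]_(#|I|, n) := \matrix_(k, j) nu (enum_val k) 0 j.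
pose Rm : 'M[fps K s]_#|I| := \matrix_(k, k') R (enum_val k) (enum_val k').
have HE : H = Nu + Rm *m H.
  apply/matrixP=> k j; rewrite !mxE {1}hE !mxE summxE; congr (_ + _).
  rewrite [LHS](reindex (fun k : 'I_#|I| => enum_val k)) /=; last first.
    by apply: onW_bij; apply: enum_val_bij.
  by apply: eq_bigr => k' _; rewrite !mxE.
pose D := \det (1%:M - Rm).
have D_coef0 : fps_coef0 D = 1.
  rewrite /D -det_map_mx map_mxB map_mx1.
  have -> : map_mx (@fps_coef0 K s) Rm = 0 by apply/matrixP=> k k'; rewrite !mxE R0.
  by rewrite subr0 det1.
have AH : (1%:M - Rm) *m H = Nu by rewrite mulmxBl mul1mx {1}HE addrK.
have DH : D *: H = \adj (1%:M - Rm) *m Nu by rewrite -AH mulmxA mul_adj_mx mul_scalar_mx.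
have S_DH k : S (row k (D *: H)).
  rewrite DH row_mul mulmx_sum_row; apply: submod_sum => k'.
  by apply: SZ; rewrite (_ : row k' Nu = nu (enum_val k')) //; apply/rowP=> j; rewrite !mxE.
move=> p; rewrite -(enum_rankK p).
have -> : h (enum_val (enum_rank p)) = fps_inv D *: row (enum_rank p) (D *: H).
  rewrite linearZ /= scalerA fps_mulVf ?D_coef0 ?oner_neq0 // scale1r.
  by apply/rowP=> j; rewrite !mxE.
exact: SZ.
Qed.

Variable d : nat.
Local Notation L := #|{: boxI n s d}|.
Local Notation W B j := (B + deg_ge_mx K s n d j)%MS.

Section Stall.
Variables (k j : nat) (B : 'M[K]_(k, L)) (w : 'I_k -> 'rV[fps K s]_n).
Hypotheses (Sw : forall r, S (w r)) (Bw : forall r, row r B = trunc d (w r)).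
Hypotheses (jd : (j <= d)%N) (stall : (W B j <= W B j.+1)%MS).

Let comb (x : 'rV[K]_k) := \sum_r fps_C (x 0 r) *: w r.

Let S_comb x : S (comb x).
Proof. by apply: submod_sum => r; apply: SZ. Qed.

(* When the ranks stall at [j], each degree-[j] basis vector is congruent
   modulo S to a vector vanishing below degree [j + 1]. *)
Lemma deg_mon_vec_relation i (b : {ffun 'I_s -> 'I_j.+1}) :
  exists2 nu, S nu & exists2 q : 'I_n -> {ffun 'I_s -> 'I_j.+1} -> fps K s,
    (forall i' b', fps_coef0 (q i' b') = 0) &
    deg_mon_vec K i b = nu + \sum_(p : boxI n s j) q p.1 p.2 *: deg_mon_vec K p.1 p.2.
Proof.
have [bj | bj] := eqVneq (mdeg (mon_of_box b)) j; last first.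
  exists 0 => //; exists (fun _ _ => 0) => //.
  by rewrite /deg_mon_vec (negPf bj) add0r big1 // => p _; rewrite scale0r.
have b_box l : (mon_of_box b l <= d)%N by rewrite (leq_trans (mcoef_le_mdeg _ l)) ?bj.
set k0 := enum_rank ((i, box_of_mon d (mon_of_box b)) : boxI n s d).
have : ((delta_mx 0 k0 : 'rV[K]_L) <= W B j.+1)%MS.
  apply: (submx_trans _ stall); apply: (submx_trans _ (addsmxSr B _)).
  by rewrite -(@row_deg_ge_mx K s n d j k0) ?row_sub // enum_rankK /= box_of_monK ?bj.
case/sub_addsmxP=> -[x y] /= xy.
pose mu := untrunc (y *m deg_ge_mx K s n d j.+1).
have mu0 : vanish_below j.+1 mu.
  apply: untrunc_vanish => k' k'j; rewrite mul_mx_diag !mxE ifN ?mulr0 //.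
  by rewrite -ltnNge.
pose rest := deg_mon_vec K i b - comb x - mu.
have rest0 : vanish_below j.+1 rest.
  apply: (vanish_below_le (j := d.+1)); rewrite ?ltnS //; apply: trunc_eq0_vanish.
  rewrite /rest /mu !raddfB /= trunc_deg_mon_vec // untruncK -/k0 xy.
  by rewrite (trunc_comb _ Bw) /=; apply/rowP=> l; rewrite !mxE; ring.
have : vanish_below (j + 1) (mu + rest) by rewrite addn1; apply: vanish_belowD.
case/vanish_below_decomp=> q q0 qE.
exists (comb x); first exact: S_comb.
exists q.
  by move=> i' b'; apply: q0; rewrite mdeg0.
by rewrite -qE /rest; apply/rowP=> l; rewrite !mxE; ring.
Qed.

Lemma vanish_below_mem_of_stall v : vanish_below j v -> S v.
Proof.
pose rel (p : boxI n s j) nu (q : 'I_n -> {ffun 'I_s -> 'I_j.+1} -> fps K s) :=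
  (forall i' b', fps_coef0 (q i' b') = 0) /\
  deg_mon_vec K p.1 p.2 = nu + \sum_(p' : boxI n s j) q p'.1 p'.2 *: deg_mon_vec K p'.1 p'.2.
have nu_ex (p : boxI n s j) : exists nu, S nu /\ exists q, rel p nu q.
  have [nu Snu [q q0 qE]] := deg_mon_vec_relation p.1 p.2.
  by exists nu; split=> //; exists q.
have [nu nuP] := boolp.choice nu_ex.
have R_ex (p : boxI n s j) : exists q, rel p (nu p) q by case: (nuP p).
have [R RP] := boolp.choice R_ex.
have S_deg_mon_vec (p : boxI n s j) : S (deg_mon_vec K p.1 p.2).
  apply: (nakayama_mem (h := fun p => deg_mon_vec K p.1 p.2) (nu := nu)
                       (R := fun p p' => R p p'.1 p'.2)).
  - by move=> p1 p2; case: (RP p1) => R0 _; apply: R0.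
  - by move=> p1; case: (nuP p1).
  - by move=> p1; case: (RP p1).
move=> v0; have v0' : vanish_below (j + 0) v by rewrite addn0.
have [q _ ->] := vanish_below_decomp v0'.
by apply: submod_sum => p; apply: SZ.
Qed.

End Stall.

(* The ranks of B + (coordinates of degree >= j) must stall at some j <= d;
   there S contains every vector vanishing below degree j, hence everything whose
   truncation lies in the row space of B, which has codimension at most d. *)
Lemma codim_le_of_trunc_rank k (B : 'M[K]_(k, L)) (w : 'I_k -> 'rV[fps K s]_n) :
  (forall r, S (w r)) -> (forall r, row r B = trunc d (w r)) ->
  (L <= \rank B + d)%N -> codim_le S d.
Proof.
move=> Sw Bw rankB.
have [j jd rank_stall] : exists2 j, (j <= d)%N & \rank (W B j.+1) = \rank (W B j).
  apply: (nonincreasing_stalls (r := fun j => \rank (W B j)) (L := L)).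
  - by move=> j; apply/mxrankS/addsmxS/deg_ge_mxS.
  - exact: rank_leq_col.
  - by apply: leq_trans rankB _; rewrite leq_add2r mxrankS ?addsmxSl.
have stall : (W B j <= W B j.+1)%MS.
  have sub : (W B j.+1 <= W B j)%MS by apply/addsmxS/deg_ge_mxS.
  by have := (mxrank_leqif_sup sub).2; rewrite rank_stall eqxx.
have [E BE] := exists_complement_rows rankB.
have Etrunc r : row r E = trunc d (untrunc (row r E)) by rewrite untruncK.
exists (fun r => untrunc (row r E)) => g.
have [[x c] /= gE] := sub_addsmxP (BE (trunc d g)).
exists (fun r => c 0 r); set e := \sum_r _.
pose comb := \sum_r fps_C (x 0 r) *: w r.
rewrite -[g - e](addrNK comb); apply: SD; last by apply: submod_sum => r; apply: SZ.
apply: (vanish_below_mem_of_stall Sw Bw jd stall).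
apply: (vanish_below_le (j := d.+1) (leqW jd)); apply: trunc_eq0_vanish.
by rewrite !raddfB /= gE (trunc_comb _ Etrunc) -(trunc_comb _ Bw) addrK subrr.
Qed.

End Submodule.

Section Specialization.
Variables (K : fieldType) (s n : nat).
Implicit Types (f g : mps K s) (u w : 'I_n -> mps K s).

Lemma mps_mulE f g : mps_mul f g = (f : fps {poly K} s) * g.
Proof.
apply: funext=> a; rewrite fpsM /mps_mul /mdivisors big_map big_filter big_enum_cond.
by apply: eq_big => // b _; congr (f _ * g _); apply/ffunP=> i; rewrite !ffunE.
Qed.

Definition fps_eval (t0 : K) f : fps K s := fun a => (f a).[t0].
Definition fps_polyC (r : fps K s) : mps K s := fun a => (r a)%:P.
Definition vec_eval (t0 : K) w : 'rV[fps K s]_n := \row_i fps_eval t0 (w i).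

Lemma fps_evalM t0 f g : fps_eval t0 (mps_mul f g) = fps_eval t0 f * fps_eval t0 g.
Proof.
apply: funext=> a; rewrite mps_mulE /fps_eval !fpsM horner_sum.
by apply: eq_bigr => b _; rewrite hornerM.
Qed.

Lemma fps_polyCK t0 : cancel fps_polyC (fps_eval t0).
Proof. by move=> r; apply: funext=> a; rewrite /fps_eval /fps_polyC hornerC. Qed.

Lemma vec_evalD t0 u w : vec_eval t0 (vadd u w) = vec_eval t0 u + vec_eval t0 w.
Proof. by apply/rowP=> i; rewrite !mxE; apply: funext=> a; rewrite fpsD /fps_eval hornerD. Qed.

Lemma vec_eval0 t0 : vec_eval t0 (@vzero K s n) = 0.
Proof. by apply/rowP=> i; rewrite !mxE; apply: funext=> a; rewrite /fps_eval horner0. Qed.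

Lemma vec_eval_polyscaleC t0 c w :
  vec_eval t0 (vpolyscale c%:P w) = fps_C c *: vec_eval t0 w.
Proof.
apply/rowP=> i; rewrite !mxE; apply: funext=> a.
by rewrite fps_CM /fps_eval /vpolyscale /mps_polyscale hornerCM.
Qed.

Lemma vec_eval_polyscaleN1 t0 w : vec_eval t0 (vpolyscale (-1) w) = - vec_eval t0 w.
Proof.
apply/rowP=> i; rewrite !mxE; apply: funext=> a.
by rewrite fpsN /fps_eval /vpolyscale /mps_polyscale hornerM hornerN hornerC mulN1r.
Qed.

Lemma vec_eval_big t0 d (F : 'I_d -> 'I_n -> mps K s) :
  vec_eval t0 (\big[@vadd K s n/@vzero K s n]_(j < d) F j) = \sum_(j < d) vec_eval t0 (F j).
Proof. exact: (big_morph (vec_eval t0) (vec_evalD t0) (vec_eval0 t0)). Qed.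

Lemma vec_eval_polyC t0 (g : 'rV[fps K s]_n) : vec_eval t0 (fun i => fps_polyC (g 0 i)) = g.
Proof. by apply/rowP=> i; rewrite mxE fps_polyCK. Qed.

Definition ptrunc d w : 'rV[{poly K}]_#|{: boxI n s d}| :=
  \row_k w (enum_val k).1 (mon_of_box (enum_val k).2).

Lemma map_horner_ptrunc t0 d w : map_mx (horner_eval t0) (ptrunc d w) = trunc d (vec_eval t0 w).
Proof. by apply/rowP=> k; rewrite !mxE horner_evalE. Qed.

Variable N : ('I_n -> mps K s) -> Prop.
Hypothesis N_submod : is_submodule N.

(* The image of N in K[[x]]^n under t |-> t0; M(t0) is the quotient of
   K[[x]]^n by it. *)
Definition fiber_submod (t0 : K) (v : 'rV[fps K s]_n) := exists2 u, N u & v = vec_eval t0 u.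

Lemma fiber_submod0 t0 : fiber_submod t0 0.
Proof. by case: N_submod => N0 _ _; exists (@vzero K s n); rewrite ?vec_eval0. Qed.

Lemma fiber_submodD t0 v v' :
  fiber_submod t0 v -> fiber_submod t0 v' -> fiber_submod t0 (v + v').
Proof.
case: N_submod => _ ND _ [u Nu ->] [u' Nu' ->].
by exists (vadd u u'); rewrite ?vec_evalD //; apply: ND.
Qed.

Lemma fiber_submodZ t0 r v : fiber_submod t0 v -> fiber_submod t0 (r *: v).
Proof.
case: N_submod => _ _ NZ [u Nu ->]; exists (vscale (fps_polyC r) u); first exact: NZ.
by apply/rowP=> i; rewrite !mxE /vscale fps_evalM fps_polyCK.
Qed.

(* Two series with equal values at t0 differ by a multiple of t - t0. *)
Lemma in_fiber_kernelE t0 w : in_fiber_kernel N t0 w <-> fiber_submod t0 (vec_eval t0 w).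
Proof.
split=> [[u [v [Nu ->]]] | [u Nu wu]].
  exists u => //; rewrite vec_evalD; apply/rowP=> i; rewrite !mxE.
  apply: funext=> a; rewrite fpsD /fps_eval /vpolyscale /mps_polyscale.
  by rewrite hornerM hornerXsubC subrr mul0r addr0.
exists u, (fun i a => (w i a - u i a) %/ ('X - t0%:P)); split=> //.
apply: funext=> i; apply: funext=> a.
rewrite /vadd /mps_add /vpolyscale /mps_polyscale mulrC divpK; first by rewrite addrC subrK.
have := congr1 (fun v : 'rV_n => v 0 i a) wu; rewrite !mxE /fps_eval => wua.
by rewrite dvdp_XsubCl /root hornerD hornerN wua subrr.
Qed.

Lemma dimK_fiber_leE t0 d : dimK_fiber_le N t0 d <-> codim_le (fiber_submod t0) d.
Proof.
split=> [[e eP] | [e eP]].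
  exists (fun j => vec_eval t0 (e j)) => g.
  have [c /in_fiber_kernelE cP] := eP (fun i => fps_polyC (g 0 i)); exists c.
  move: cP; rewrite vec_evalD vec_eval_polyscaleN1 vec_eval_big vec_eval_polyC.
  by under eq_bigr do rewrite vec_eval_polyscaleC.
exists (fun j i => fps_polyC (e j 0 i)) => w.
have [c cP] := eP (vec_eval t0 w); exists c; apply/in_fiber_kernelE.
rewrite vec_evalD vec_eval_polyscaleN1 vec_eval_big.
by under eq_bigr do rewrite vec_eval_polyscaleC vec_eval_polyC.
Qed.

End Specialization.

Lemma poly_roots_finite (K : fieldType) (p : {poly K}) : p != 0 ->
  exists S : seq K, forall x, root p x = (x \in S).
Proof.
elim: {p}(size p) {-2}p (leqnn (size p)) => [|m IHm] p p_size p_neq0.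
  by move: p_neq0; rewrite -size_poly_eq0 -leqn0 p_size.
have [[a pa] | no_root] := pselect (exists a, root p a); last first.
  by exists [::] => x; apply/negP => px; apply: no_root; exists x.
pose q := p %/ ('X - a%:P).
have pE : p = q * ('X - a%:P) by rewrite divpK // dvdp_XsubCl.
have q_neq0 : q != 0 by apply: contraNneq p_neq0; rewrite pE => ->; rewrite mul0r.
have [|S SP] := IHm _ _ q_neq0.
  by move: p_size; rewrite pE size_Mmonic ?monicXsubC // size_XsubC addn2.
by exists (a :: S) => x; rewrite pE rootM root_XsubC SP in_cons orbC.
Qed.

(* Row-freeness of a polynomial matrix specialized at t0 is witnessed by a
   polynomial minor that does not vanish at t0. *)
Lemma row_free_horner_cofinite (K : fieldType) k l (P : 'M[{poly K}]_(k, l)) (o : K) :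
  row_free (map_mx (horner_eval o) P) ->
  exists S : seq K, o \notin S /\
    forall t0, t0 \notin S -> row_free (map_mx (horner_eval t0) P).
Proof.
case/row_freeP=> C PC; pose q := \det (P *m map_mx polyC C).
have qE t0 : q.[t0] = \det (map_mx (horner_eval t0) P *m C).
  rewrite -horner_evalE /q -det_map_mx map_mxM; congr (\det (_ *m _)).
  by apply/matrixP=> i j; rewrite !mxE /= ?horner_evalE hornerC.
have q_neq0 : q != 0.
  by apply: contra_eq_neq (qE o) => ->; rewrite horner0 PC det1 eq_sym oner_neq0.
have [S SP] := poly_roots_finite q_neq0.
exists S; split=> [|t0]; first by rewrite -SP /root qE PC det1 oner_neq0.
rewrite -SP /root qE => qt0; rewrite /row_free eqn_leq rank_leq_row /=.
have PC_unit : map_mx (horner_eval t0) P *m C \in unitmx by rewrite unitmxE unitfE.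
by rewrite -{1}(mxrank_unit PC_unit) mxrankM_maxl.
Qed.

Theorem mainTheorem6 (K : fieldType) (s n : nat)
  (N : ('I_n -> mps K s) -> Prop) (HN : is_submodule N) (o : K) (d : nat) :
  dimK_fiber_le N o d ->
  exists U : K -> Prop,
    [/\ zariski_open_A1 U, U o &
        forall t0 : K, U t0 -> dimK_fiber_le N t0 d].
Proof.
move=> /dimK_fiber_leE codim_o.
have [k [B [B_truncs B_free B_span]]] :=
  maximal_free_rows (fun y => exists2 v, fiber_submod N o v & y = trunc d v).
have rankB := rank_trunc_ge codim_o (fun v ov => B_span _ (ex_intro2 _ _ v ov erefl)).
have lift r : exists u, N u /\ row r B = trunc d (vec_eval o u).
  by have [_ [u Nu ->] ->] := B_truncs r; exists u.
have [u uP] := boolp.choice lift.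
pose P := \matrix_(r < k) ptrunc d (u r).
have P_rows t0 r : row r (map_mx (horner_eval t0) P) = trunc d (vec_eval t0 (u r)).
  by rewrite -map_row rowK map_horner_ptrunc.
have P_o : row_free (map_mx (horner_eval o) P).
  suff -> : map_mx (horner_eval o) P = B by [].
  by apply/row_matrixP=> r; rewrite P_rows; case: (uP r).
have [S [oS S_free]] := row_free_horner_cofinite P_o.
exists (fun t0 => t0 \notin S); split=> //; first by right; exists S.
move=> t0 /S_free t0_free; apply/dimK_fiber_leE.
apply: (codim_le_of_trunc_rank (fiber_submod0 HN t0) (fiber_submodD HN (t0 := t0))
          (fiber_submodZ HN (t0 := t0)) _ (P_rows t0)).
- by move=> r; exists (u r) => //; case: (uP r).
- by rewrite (eqP t0_free) -(eqP B_free).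
Qed.
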